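(* Let $d$ be a compatible metric on the Cantor space $\mathbf{C}$ and let $h:\mathbf{C}\to\mathbf{C}$ be an isometry of $(\mathbf{C},d)$. Then for every clopen set $U\subseteq\mathbf{C}$ there exists a positive integer $l$ such that $h^l(U)=U$.
   Context: $\mathbf{C}$ denotes the Cantor space. *)

From HB Require Import structures.
From mathcomp Require Import all_boot all_order all_algebra.
From mathcomp Require Import all_classical all_reals all_analysis.
Set Implicit Arguments. Unset Strict Implicit. Unset Printing Implicit Defensive.
Import Order.TTheory GRing.Theory Num.Theory.
Local Open Scope classical_set_scope.
Local Open Scope ring_scope.

Definition is_metric (R : realType) (T : Type) (d : T -> T -> R) : Prop :=
  [/\ (forall x y, 0 <= d x y),
      (forall x y, d x y = 0 <-> x = y),
      (forall x y, d x y = d y x) &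
      (forall x y z, d x z <= d x y + d y z)].

(* d is a metric on the topological space T inducing its topology:
   a set is open iff it contains a d-ball around each of its points. *)
Definition compatible_metric (R : realType) (T : topologicalType)
    (d : T -> T -> R) : Prop :=
  is_metric d /\
  forall A : set T,
    open A <-> (forall x, A x -> exists2 e : R, 0 < e & [set y | d x y < e] `<=` A).

Definition isometry_of (R : realType) (T : Type) (d : T -> T -> R) (h : T -> T) : Prop :=
  forall x y, d (h x) (h y) = d x y.

From HB Require Import structures.
From mathcomp Require Import all_boot all_order all_algebra.
From mathcomp Require Import all_classical all_reals all_analysis.
From mathcomp Require Import lra finmap.
Import Order.TTheory GRing.Theory Num.Theory.
Set Implicit Arguments.
Unset Strict Implicit.
Local Open Scope classical_set_scope.
Local Open Scope ring_scope.

(* An isometry h of a compact metric space is uniformly almost periodic: a finite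
   r-net D is moved by the iterates of h through only finitely many "patterns"
   (which net point lies near h^i q, for each q in D), so two iterates h^m, h^n
   agree up to 2r on D, and h^(n-m) then moves every point by less than 4r.
   In particular the image of h is dense; being compact it is closed, so every
   isometry is onto. A clopen U is uniformly locally constant, so an iterate
   moving every point less than its modulus of constancy maps U into U and its
   complement into its complement; being onto, it maps U onto U. *)

Lemma seq_pos_lower_bound (R : realType) (T : eqType) (s : seq T) (g : T -> R) :
  (forall x, 0 < g x) -> exists2 e, 0 < e & forall x, x \in s -> e <= g x.
Proof.
move=> g_gt0; elim: s => [|a s [e e_gt0 le_e]]; first by exists 1.
exists (Num.min e (g a)); first by rewrite lt_min e_gt0 g_gt0.
move=> x; rewrite inE => /orP [/eqP ->|xs]; first by rewrite ge_min lexx orbT.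
by rewrite ge_min le_e.
Qed.

Lemma fin_valued_repeat (A : finType) (f : nat -> A) :
  exists m n, (m < n)%N /\ f m = f n.
Proof.
apply: contrapT => no_repeat.
pose g (i : 'I_#|A|.+1) := f i.
suff /leq_card : injective g by rewrite card_ord ltnn.
move=> i j gij; apply/val_inj; apply: contrapT => neq_ij; apply: no_repeat.
case: (ltngtP i j) => [lt_ij|lt_ji|//]; first by exists i, j.
by exists j, i.
Qed.

Lemma isometry_iter (R : realType) (T : Type) (d : T -> T -> R) (h : T -> T) n :
  isometry_of d h -> isometry_of d (iter n h).
Proof. by move=> h_iso; elim: n => [//|n IH] x y /=; rewrite h_iso IH. Qed.

Section CompactMetricSpace.
Variables (R : realType) (T : ptopologicalType) (d : T -> T -> R).
Hypotheses (d_compat : compatible_metric d) (T_compact : compact [set: T]).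

Let d_ge0 : forall x y, 0 <= d x y. Proof. by case: d_compat => -[]. Qed.
Let d_eq0 : forall x y, d x y = 0 <-> x = y. Proof. by case: d_compat => -[]. Qed.
Let dC : forall x y, d x y = d y x. Proof. by case: d_compat => -[]. Qed.
Let d_triangle : forall x y z, d x z <= d x y + d y z.
Proof. by case: d_compat => -[]. Qed.
Let d_open : forall A : set T,
  open A <-> (forall x, A x -> exists2 e, 0 < e & [set y | d x y < e] `<=` A).
Proof. by case: d_compat. Qed.

Lemma open_metric_ball x e : open [set y | d x y < e].
Proof.
apply/d_open => y /= dxy; exists (e - d x y); first by rewrite subr_gt0.
by move=> z /= dyz; have := d_triangle x y z; lra.
Qed.

Lemma metric_hausdorff : hausdorff_space T.
Proof.
move=> p q cl_pq; apply: contrapT => neq_pq.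
have d_gt0 : 0 < d p q.
  by rewrite lt_neqAle d_ge0 andbT eq_sym; apply/eqP => /d_eq0.
have ball_nbhs x : nbhs x [set y | d x y < d p q / 2].
  apply: open_nbhs_nbhs; split; first exact: open_metric_ball.
  by rewrite /= (d_eq0 x x).2 //; lra.
have [z [/= dpz dqz]] := cl_pq _ _ (ball_nbhs p) (ball_nbhs q).
by have := d_triangle p z q; rewrite (dC z q); lra.
Qed.

Lemma isometry_displacement_net (g : T -> T) (D : set T) r s :
  isometry_of d g ->
  (forall x, exists2 q, D q & d q x < r) -> (forall q, D q -> d q (g q) < s) ->
  forall x, d x (g x) < r + s + r.
Proof.
move=> g_iso net moveD x; have [q Dq dqx] := net x.
have := d_triangle x q (g x); have := d_triangle q (g q) (g x).
by rewrite g_iso (dC x q); have := moveD q Dq; lra.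
Qed.

Lemma finite_ball_cover (E : T -> R) : (forall p, 0 < E p) ->
  exists D : {fset T}, forall x, exists2 p, p \in D & d p x < E p.
Proof.
move=> E_gt0; move: T_compact; rewrite compact_cover.
case/(_ T setT (fun p => [set y | d p y < E p])).
- by move=> p _; apply: open_metric_ball.
- by move=> x _; exists x => //=; rewrite (d_eq0 x x).2.
by move=> D _ cover; exists D => x; have [p /= ? ?] := cover x I; exists p.
Qed.

Lemma clopen_uniformly_locally_constant (U : set T) : clopen U ->
  exists2 eps, 0 < eps & forall x y, d x y < eps -> (U x <-> U y).
Proof.
move=> [U_open U_closed].
have locally_constant x : exists e, 0 < e /\ forall y, d x y < e -> (U y <-> U x).
  have [Ux|nUx] := pselect (U x).
    by have [e e_gt0 sub] := (d_open U).1 U_open x Ux; exists e; split => // y /sub.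
  have : open (~` U) by rewrite openC.
  by case/(d_open _).1/(_ x nUx) => e e_gt0 sub; exists e; split => // y /sub.
have [E E_spec] := choice locally_constant.
pose r p := E p / 2.
have r_gt0 p : 0 < r p by have [+ _] := E_spec p; rewrite /r; lra.
have [D cover] := finite_ball_cover r_gt0.
have [eps eps_gt0 le_eps] := seq_pos_lower_bound D r_gt0.
exists eps => // x y dxy; have [p pD] := cover x; rewrite /r => dpx.
have [_ constU] := E_spec p; have := le_eps p pD; rewrite /r => le_eps_p.
have dpy : d p y < E p by have := d_triangle p x y; lra.
by rewrite (constU x) ?(constU y dpy) //; lra.
Qed.

Section Isometry.
Variable h : T -> T.
Hypothesis h_iso : isometry_of d h.

Lemma isometry_continuous : continuous h.
Proof.
apply/continuousP => A A_open; apply/d_open => x Ahx.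
have [e e_gt0 sub] := (d_open A).1 A_open (h x) Ahx.
by exists e => // z dxz; apply: sub; rewrite /= h_iso.
Qed.

Lemma isometry_almost_periodic del : 0 < del ->
  exists2 l, (0 < l)%N & forall x, d x (iter l h x) < del.
Proof.
move=> del_gt0; have r_gt0 : 0 < del / 4 by lra.
have [D net] := @finite_ball_cover (fun=> del / 4) (fun=> r_gt0).
have near_net x : exists q : D, d (val q) x < del / 4.
  by have [p pD dpx] := net x; exists [` pD]%fset.
have [c c_near] := choice near_net.
pose pattern i : {ffun D -> D} := [ffun q => c (iter i h (val q))].
have [m [n [lt_mn eq_pattern]]] := fin_valued_repeat pattern.
have moveD q : q \in D -> d q (iter (n - m) h q) < del / 2.
  move=> qD; have /ffunP/(_ [` qD]%fset) := eq_pattern; rewrite !ffunE /= => eq_c.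
  rewrite -(isometry_iter m h_iso) -iterD subnKC 1?ltnW //.
  have := c_near (iter m h q); have := c_near (iter n h q); rewrite -eq_c.
  have := d_triangle (iter m h q) (val (c (iter m h q))) (iter n h q).
  have := dC (iter m h q) (val (c (iter m h q))); lra.
exists (n - m)%N; first by rewrite subn_gt0.
move=> x; have := isometry_displacement_net (isometry_iter (n - m) h_iso) net moveD x.
lra.
Qed.

Lemma isometry_surjective y : exists x, h x = y.
Proof.
have image_closed : closed (range h).
  apply: compact_closed; first exact: metric_hausdorff.
  by apply: continuous_compact => //; apply: continuous_subspaceT; exact: isometry_continuous.
apply: contrapT => y_notin_image.
have y_in_compl : (~` range h) y by move=> [x _ hx]; apply: y_notin_image; exists x.
have [e e_gt0 sub] := (d_open _).1 (closed_openC image_closed) y y_in_compl.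
have [[|l] // _ near_y] := isometry_almost_periodic e_gt0.
by apply: (sub _ (near_y y)); exists (iter l h y).
Qed.

End Isometry.
End CompactMetricSpace.

Theorem proposition6p2 (R : realType) (d : cantor_space -> cantor_space -> R)
    (h : cantor_space -> cantor_space) :
  compatible_metric d -> isometry_of d h ->
  forall U : set cantor_space, clopen U ->
  exists l : nat, (0 < l)%N /\ (iter l h) @` U = U.
Proof.
move=> d_compat h_iso U U_clopen.
have C_compact := cantor_space_compact.
have [eps eps_gt0 constU] := clopen_uniformly_locally_constant d_compat C_compact U_clopen.
have [l l_gt0 near_id] := isometry_almost_periodic d_compat C_compact h_iso eps_gt0.
exists l; split => //; apply/seteqP; split.
- by move=> _ [x Ux <-]; apply/(constU x _ (near_id x)).1.
- move=> y Uy; have [x hlx] := isometry_surjective d_compat C_compact (isometry_iter l h_iso) y.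
  by exists x => //; apply/(constU _ _ (near_id x)).2; rewrite hlx.
Qed.
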